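(* For every composition $I=(i_1,\dots,i_r)$, \[ \mathrm{PT}^A_{(1,i_1,i_2,\dots,i_r)}(q)=\mathrm{PT}^A_I(q), \qquad \mathrm{PT}^A_{(1+i_1,i_2,\dots,i_r)}(q)=[r]_q\,\mathrm{PT}^A_I(q)+\sum_{k=1}^{r-1}q^{k-1}\,\mathrm{PT}^A_{(i_1,\dots,i_{k-1},i_k+i_{k+1},i_{k+2},\dots,i_r)}(q). \]
   Context: $[m]_q=1+q+\dots+q^{m-1}$. Let $k\ge1$ and let $\lambda$ be a Young diagram with exactly $k$ rows (rows of length $0$ allowed) and exactly $n-k$ nonempty columns, drawn in French convention (rows left-justified, longest row at the bottom). Encode $\lambda$ by the composition $I=(i_1,\dots,i_k)$ of $n$ where, for $1\le t\le k$, $i_t-1$ is the number of columns of length $k-t+1$ (a bijection onto compositions of $n$ with $k$ parts). A (type A) permutation tableau of shape $\lambda$ is a filling of the boxes with $0$'s and $1$'s such that (1) every column contains at least one $1$, and (2) no box containing a $0$ has both a $1$ below it in the same column and a $1$ to its left in the same row. Its rank is (number of $1$'s) minus (number of columns). $\mathrm{PT}^A_I(q)=\sum_T q^{\mathrm{rank}(T)}$ over permutation tableaux $T$ of the shape encoded by $I$. *)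

From mathcomp Require Import all_boot all_order all_algebra.
Set Implicit Arguments. Unset Strict Implicit. Unset Printing Implicit Defensive.
Import GRing.Theory.

Definition composition (I : seq nat) : bool := all (fun i => 0 < i)%N I.

(* Shape encoded by I = (i_1,...,i_k): k rows, and for t = 1..k exactly
   i_t - 1 columns of length k - t + 1.  Columns are listed from left to right
   in weakly decreasing length (French convention, left-justified rows,
   longest row at the bottom).  Below, with 0-indexed t, column length k - t. *)
Definition colLens (I : seq nat) : seq nat :=
  flatten [seq nseq (nth 0 I t).-1 (size I - t) | t <- iota 0 (size I)].

Definition nrows (I : seq nat) : nat := size I.
Definition ncols (I : seq nat) : nat := size (colLens I).

(* Rows are 0-indexed from the bottom, columns 0-indexed from the left.
   Box (r, c) belongs to the diagram iff r < length of column c. *)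
Definition inShape (I : seq nat) (r c : nat) : bool := (r < nth 0 (colLens I) c)%N.

(* A filling is a 0/1 function on all cells of the k x (n-k) rectangle
   (true = 1); cells outside the diagram are required to be 0 (false), so
   fillings of the diagram correspond bijectively to such functions. *)
Definition filling (I : seq nat) := {ffun 'I_(nrows I) * 'I_(ncols I) -> bool}.

Definition isPT (I : seq nat) (T : filling I) : bool :=
  [&& [forall x : 'I_(nrows I) * 'I_(ncols I),
         ~~ inShape I x.1 x.2 ==> ~~ T x],
      [forall c : 'I_(ncols I), exists r : 'I_(nrows I), T (r, c)] &
      (* (2) no 0 has both a 1 below it in its column and a 1 to its left in its row *)
      [forall x : 'I_(nrows I) * 'I_(ncols I),
         (inShape I x.1 x.2 && ~~ T x) ==>
         ~~ ([exists r : 'I_(nrows I), (r < x.1)%N && T (r, x.2)] &&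
             [exists c : 'I_(ncols I), (c < x.2)%N && T (x.1, c)])]].

Definition ptRank (I : seq nat) (T : filling I) : nat :=
  (#|[set x | T x]| - ncols I)%N.

Definition PT (I : seq nat) : {poly int} :=
  (\sum_(T : filling I | isPT T) 'X^(ptRank T))%R.

Definition qint (m : nat) : {poly int} := (\sum_(j < m) 'X^j)%R.

(* (i_1,...,i_{k-1}, i_k + i_{k+1}, i_{k+2},...,i_r) with j = k-1 0-indexed *)
Definition mergeAt (I : seq nat) (j : nat) : seq nat :=
  take j I ++ (nth 0 I j + nth 0 I j.+1)%N :: drop j.+2 I.

From mathcomp Require Import all_boot all_order all_algebra.
From mathcomp Require Import zify ring.
Set Implicit Arguments. Unset Strict Implicit. Unset Printing Implicit Defensive.
Import GRing.Theory.

(* Generalize [PT] to the shape given by any column-length function.  Let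
   column [c0] be a corner, i.e. every column to its right is strictly shorter,
   with top cell in row [r0].  Permutation tableaux split in three classes:
   - the corner holds a 0: column [c0] has a 1 below it, so by (2) no 1 lies to
     its left and row [r0] is empty; deleting it is a bijection;
   - the corner holds the only 1 of its column: deleting the column loses one 1
     and one column, so the rank is unchanged;
   - otherwise the corner cell can be removed from the shape, losing one 1 and
     no column, i.e. one factor [q].
   For the shape of [incr_nth I t] take the last column of length [n - t]: the
   three shapes are those of [incr_nth I t.+1], [I] and [mergeAt I t] (for the
   last part, the first and third have an empty column and contribute 0), and
   unrolling the recursion gives the second identity.  The first identity is
   the deletion of the empty top row. *)

Local Notation grid k m := {ffun 'I_k * 'I_m -> bool}.

Definition isPTlen k m (len : nat -> nat) (T : grid k m) : bool :=
  [&& [forall x : 'I_k * 'I_m, ~~ (x.1 < len x.2)%N ==> ~~ T x],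
      [forall c : 'I_m, exists r : 'I_k, T (r, c)] &
      [forall x : 'I_k * 'I_m,
         ((x.1 < len x.2)%N && ~~ T x) ==>
         ~~ ([exists r : 'I_k, (r < x.1)%N && T (r, x.2)] &&
             [exists c : 'I_m, (c < x.2)%N && T (x.1, c)])]].

Definition rankLen k m (T : grid k m) : nat := (#|[set x | T x]| - m)%N.

Definition PTlen k m len : {poly int} :=
  (\sum_(T : grid k m | isPTlen len T) 'X^(rankLen T))%R.

Lemma PT_PTlen I : PT I = PTlen (nrows I) (ncols I) (nth 0 (colLens I)).
Proof. by []. Qed.

Section Cells.
Variables k m : nat.

(* [false] outside the grid. *)
Definition cell (T : grid k m) (r c : nat) : bool :=
  if (insub r : option 'I_k) is Some i then
    if (insub c : option 'I_m) is Some j then T (i, j) else false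
  else false.

Lemma cellE (T : grid k m) (i : 'I_k) (j : 'I_m) : cell T i j = T (i, j).
Proof. by rewrite /cell !valK. Qed.

Lemma cell_bound (T : grid k m) r c : cell T r c -> (r < k) && (c < m).
Proof. by rewrite /cell; case: insubP => // i -> _; case: insubP => // j -> _. Qed.

Lemma cell_inj (T1 T2 : grid k m) : cell T1 =2 cell T2 -> T1 = T2.
Proof. by move=> E; apply/ffunP => -[i j]; rewrite -!cellE E. Qed.

Definition mkgrid (g : nat -> nat -> bool) : grid k m :=
  [ffun x : 'I_k * 'I_m => g x.1 x.2].

Lemma cell_mkgrid g r c : cell (mkgrid g) r c = [&& r < k, c < m & g r c].
Proof.
rewrite /cell; case: insubP => [i -> Ei|/negbTE-> //].
case: insubP => [j -> Ej|/negbTE->]; last by rewrite andbF.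
by rewrite ffunE /= Ei Ej.
Qed.

Lemma cell_mkgrid_in (g : nat -> nat -> bool) :
  (forall r c, g r c -> (r < k) && (c < m)) -> cell (mkgrid g) =2 g.
Proof.
move=> gb r c; rewrite cell_mkgrid.
by case E: (g r c); rewrite ?andbF ?andbT //; apply: gb.
Qed.

Definition ones (f : nat -> nat -> bool) : nat := \sum_(i < k) \sum_(j < m) f i j.

Lemma card_grid (T : grid k m) : #|[set x | T x]| = ones (cell T).
Proof.
rewrite /ones -sum1_card pair_big /= big_mkcond /=.
by apply: eq_bigr => -[i j] _; rewrite inE cellE; case: (T (i, j)).
Qed.

End Cells.

Definition ptfun k m (len : nat -> nat) (f : nat -> nat -> bool) : Prop :=
  [/\ forall r c, f r c -> [&& r < k, c < m & r < len c],
      forall c, c < m -> exists2 r, r < k & f r c &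
      forall r c r' c', r < k -> c < m -> r < len c -> ~~ f r c ->
        r' < r -> f r' c -> c' < c -> f r c' -> False].

Lemma isPTlenP k m len (T : grid k m) : isPTlen len T <-> ptfun k m len (cell T).
Proof.
split.
- case/and3P=> /forallP inS /forallP col1 /forallP no0; split.
  + move=> r c Trc; have /andP[rk cm] := cell_bound Trc.
    have := inS (Ordinal rk, Ordinal cm).
    by rewrite /= -cellE Trc rk cm /=; case: (r < len c).
  + move=> c cm; case/existsP: (col1 (Ordinal cm)) => i Ti.
    by exists i; rewrite // (cellE T i (Ordinal cm)).
  + move=> r c r' c' rk cm rl nT r'r Tr' c'c Tc'.
    have := no0 (Ordinal rk, Ordinal cm); rewrite /= rl -cellE nT /=.
    case/nandP => /existsP; apply.
    * by exists (Ordinal (ltn_trans r'r rk)); rewrite /= r'r -cellE.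
    * by exists (Ordinal (ltn_trans c'c cm)); rewrite /= c'c -cellE.
- case=> inS col1 no0; apply/and3P; split.
  + apply/forallP => -[i j] /=; apply/implyP => nl; apply/negP => Tij.
    by have := inS i j; rewrite cellE Tij (negbTE nl) !andbF => /(_ isT).
  + apply/forallP => j; have [r rk Tr] := col1 j (ltn_ord j).
    by apply/existsP; exists (Ordinal rk); rewrite -cellE.
  + apply/forallP => -[i j] /=; apply/implyP => /andP[rl nT].
    apply/negP => /andP[/existsP[i' /andP[i'i Ti']] /existsP[j' /andP[j'j Tj']]].
    by apply: (no0 i j i' j'); rewrite ?cellE.
Qed.

Lemma ptfun_ext k m len len' f g :
  len =1 len' -> f =2 g -> ptfun k m len f -> ptfun k m len' g.
Proof.
move=> El Ef [inS col1 no0]; split.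
- by move=> r c; rewrite -El -Ef; apply: inS.
- by move=> c /col1[r rk fr]; exists r; rewrite // -Ef.
- by move=> r c r' c'; rewrite -El -!Ef; apply: no0.
Qed.

Lemma eq_PTlen k m len len' : len =1 len' -> PTlen k m len = PTlen k m len'.
Proof.
move=> El; apply: eq_bigl => T.
by apply/idP/idP => /isPTlenP V; apply/isPTlenP; apply: ptfun_ext V.
Qed.

Lemma ptfun_ones k m len f : ptfun k m len f -> m <= ones k m f.
Proof.
case=> _ col1 _; rewrite /ones exchange_big /=.
rewrite -[X in X <= _](card_ord m) -sum1_card.
apply: leq_sum => j _; have [r rk fr] := col1 j (ltn_ord j).
by rewrite (bigD1 (Ordinal rk)) //= fr leq_addr.
Qed.

Lemma PTlen_col0 k m len c : c < m -> len c = 0 -> PTlen k m len = 0%R.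
Proof.
move=> cm l0; rewrite /PTlen big_pred0 // => T; apply/negP => /isPTlenP[inS col1 _].
by have [r _ /inS/and3P[_ _]] := col1 c cm; rewrite l0.
Qed.

Lemma big_bij_on (A B : finType) (R : Type) (idx : R) (op : Monoid.com_law idx)
    (P : pred A) (Q : pred B) (e : B -> A) (r : A -> B) (F : A -> R) (G : B -> R) :
  (forall b, Q b -> P (e b)) ->
  (forall a, P a -> Q (r a) /\ e (r a) = a) ->
  (forall b, Q b -> r (e b) = b) ->
  (forall b, Q b -> F (e b) = G b) ->
  \big[op/idx]_(a | P a) F a = \big[op/idx]_(b | Q b) G b.
Proof.
move=> Pe Qr re FG; rewrite (reindex_onto e r) => [|a Pa]; last by case: (Qr a Pa).
apply: eq_big => [b|b /andP[Pb]].
- apply/idP/idP => [/andP[Pb /eqP E]|Qb]; last by rewrite Pe // re // eqxx.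
  by have [+ _] := Qr _ Pb; rewrite E.
- by move=> /eqP E; apply: FG; have [+ _] := Qr _ Pb; rewrite E.
Qed.

Lemma bumpE h i : bump h i = if i < h then i else i.+1.
Proof. by rewrite /bump; case: ltnP => /= hi; lia. Qed.

Lemma bump_ltnS h i n : h <= n -> (bump h i < n.+1) = (i < n).
Proof. by rewrite bumpE; case: ifP; lia. Qed.

Lemma ltn_bump2 h i j : (bump h i < bump h j) = (i < j).
Proof. by rewrite !bumpE; case: ifP; case: ifP; lia. Qed.

Lemma unbumpK_neq h i : i != h -> bump h (unbump h i) = i.
Proof. by rewrite unbumpKcond => /negbTE->. Qed.

Definition delRowLens (r0 : nat) (len : nat -> nat) j :=
  if r0 < len j then (len j).-1 else len j.

Lemma ltn_delRowLens r0 len i j : (i < delRowLens r0 len j) = (bump r0 i < len j).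
Proof. by rewrite /delRowLens bumpE; case: ifP; case: ifP; lia. Qed.

Section RowDeletion.
Variables (k n r0 : nat) (len : nat -> nat).
Hypothesis r0k : r0 <= k.

Definition insRow (f : nat -> nat -> bool) r c := (r != r0) && f (unbump r0 r) c.

Lemma insRow_bump f i c : insRow f (bump r0 i) c = f i c.
Proof. by rewrite /insRow eq_sym neq_bump bumpK. Qed.

Lemma insRow_neq f r c : insRow f r c -> r != r0.
Proof. by case/andP. Qed.

Lemma ptfun_insRow f :
  ptfun k n (delRowLens r0 len) f -> ptfun k.+1 n len (insRow f).
Proof.
case=> inS col1 no0; split.
- move=> r c /[dup] /insRow_neq /unbumpK_neq <-.
  by rewrite insRow_bump bump_ltnS // -ltn_delRowLens => /inS.
- move=> c /col1[r rk fr]; exists (bump r0 r); by rewrite ?bump_ltnS ?insRow_bump.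
- move=> r c r' c' + + + + + /[dup] /insRow_neq /unbumpK_neq Er' +
    + /[dup] /insRow_neq /unbumpK_neq Er.
  rewrite -Er -Er' bump_ltnS // -ltn_delRowLens ltn_bump2 !insRow_bump.
  exact: no0.
Qed.

Lemma ptfun_delRow f : ptfun k.+1 n len f -> (forall c, f r0 c = false) ->
  ptfun k n (delRowLens r0 len) (fun i c => f (bump r0 i) c).
Proof.
case=> inS col1 no0 f0; split.
- by move=> i c /inS; rewrite bump_ltnS // ltn_delRowLens.
- move=> c /col1[r rk fr]; have nr : r != r0 by apply: contraTneq fr => ->; rewrite f0.
  by exists (unbump r0 r); rewrite ?unbumpK_neq // -(bump_ltnS _ r0k) unbumpK_neq.
- move=> i c i' c' ik cn; rewrite ltn_delRowLens => il nf i'i.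
  rewrite -(ltn_bump2 r0) in i'i; rewrite -(bump_ltnS _ r0k) in ik.
  exact: no0 ik cn il nf i'i.
Qed.

Lemma insRow_delRow f : (forall c, f r0 c = false) ->
  insRow (fun i c => f (bump r0 i) c) =2 f.
Proof.
move=> f0 r c; case: (eqVneq r r0) => [->|nr]; first by rewrite /insRow eqxx f0.
by rewrite -{1}(unbumpK_neq nr) insRow_bump unbumpK_neq.
Qed.

Lemma ones_insRow f : ones k.+1 n (insRow f) = ones k n f.
Proof.
rewrite /ones (bigD1_ord (Ordinal (r0k : r0 < k.+1))) //= big1 => [|j _].
  by rewrite add0n; apply: eq_bigr => i _; apply: eq_bigr => j _; rewrite insRow_bump.
by rewrite /insRow eqxx.
Qed.

Lemma PTlen_delRow :
  (\sum_(T : grid k.+1 n | isPTlen len T && [forall j : 'I_n, ~~ cell T r0 j])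
     'X^(rankLen T))%R = PTlen k n (delRowLens r0 len).
Proof.
pose ins (T : grid k n) : grid k.+1 n := mkgrid k.+1 n (insRow (cell T)).
pose del (T : grid k.+1 n) : grid k n := mkgrid k n (fun i c => cell T (bump r0 i) c).
have cell_ins T : cell (ins T) =2 insRow (cell T).
  apply: cell_mkgrid_in => r c /[dup] /insRow_neq /unbumpK_neq <-.
  by rewrite insRow_bump bump_ltnS // => /cell_bound.
have cell_del T : cell (del T) =2 fun i c => cell T (bump r0 i) c.
  by apply: cell_mkgrid_in => i c /cell_bound; rewrite bump_ltnS.
apply: (@big_bij_on _ _ _ _ _ _ _ ins del).
- move=> T /isPTlenP V; apply/andP; split.
  + by apply/isPTlenP; apply: ptfun_ext (ptfun_insRow V) => // r c; rewrite cell_ins.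
  + by apply/forallP => j; rewrite cell_ins /insRow eqxx.
- move=> T /andP[/isPTlenP V /forallP Z].
  have Z' c : cell T r0 c = false.
    case: (ltnP c n) => cn; first exact/negbTE/(Z (Ordinal cn)).
    by apply: contraTF cn => /cell_bound/andP[_]; rewrite -ltnNge.
  split; first by apply/isPTlenP; apply: ptfun_ext (ptfun_delRow V Z') => // i c;
    rewrite cell_del.
  apply: cell_inj => r c; rewrite cell_ins -[RHS](insRow_delRow Z').
  by rewrite /insRow cell_del.
- by move=> T _; apply: cell_inj => i c; rewrite cell_del cell_ins insRow_bump.
- move=> T _; rewrite /rankLen !card_grid -ones_insRow.
  by congr ('X^(_ - _))%R; apply: eq_bigr => i _; apply: eq_bigr => j _; rewrite cell_ins.
Qed.

End RowDeletion.

Lemma sum_andb_eq_ord n r (b : bool) : r < n -> \sum_(i < n) (b && ((i : nat) == r)) = b.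
Proof.
move=> rn; rewrite (bigD1_ord (Ordinal rn)) //= eqxx andbT big1 ?addn0 // => i _.
by rewrite /= eq_sym (negbTE (neq_bump _ _)) andbF.
Qed.

Definition shortenCol c0 (len : nat -> nat) j := if j == c0 then (len j).-1 else len j.

Section Corner.
Variables (k m c0 : nat) (len : nat -> nat).
Hypothesis c0m : c0 < m.+1.
Hypothesis len_c0 : 0 < len c0 <= k.+1.
Hypothesis corner : forall j, c0 < j < m.+1 -> len j < len c0.

Local Notation r0 := (len c0).-1.

Let r0k : r0 < k.+1. Proof. lia. Qed.
Let ltn_len_c0 r : (r < len c0) = (r <= r0). Proof. lia. Qed.

Definition insCol (f : nat -> nat -> bool) r c :=
  if c == c0 then r == r0 else f r (unbump c0 c).

Lemma insCol_bump f r j : insCol f r (bump c0 j) = f r j.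
Proof. by rewrite /insCol eq_sym (negbTE (neq_bump _ _)) bumpK. Qed.

Lemma insCol_c0 f r : insCol f r c0 = (r == r0).
Proof. by rewrite /insCol eqxx. Qed.

Lemma ptfun_insCol f :
  ptfun k.+1 m (len \o bump c0) f -> ptfun k.+1 m.+1 len (insCol f).
Proof.
case=> inS col1 no0; split.
- move=> r c; case: (eqVneq c c0) => [->|/unbumpK_neq <-].
    by rewrite insCol_c0 => /eqP->; rewrite r0k c0m ltn_len_c0 /=.
  by rewrite insCol_bump bump_ltnS // => /inS.
- move=> c; case: (eqVneq c c0) => [-> _|/unbumpK_neq <-].
    by exists r0; rewrite ?insCol_c0.
  by rewrite bump_ltnS // => /col1[r rk fr]; exists r; rewrite ?insCol_bump.
- move=> r c r' c' rk; case: (eqVneq c c0) => [-> _|/unbumpK_neq <-].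
    by rewrite ltn_len_c0 !insCol_c0 => rr _ r'r /eqP Er'; lia.
  move: (unbump c0 c) => j; rewrite bump_ltnS // => jm rl nf r'r f' c'c.
  case: (eqVneq c' c0) => [Ec'|/unbumpK_neq Ec'].
    rewrite Ec' insCol_c0 => /eqP Er; move: c'c; rewrite Ec' => c'c.
    have /corner : c0 < bump c0 j < m.+1 by rewrite c'c bump_ltnS.
    by rewrite ltn_len_c0 -Er; lia.
  rewrite -Ec' ltn_bump2 !insCol_bump in c'c nf f' *.
  exact: no0 rk jm rl nf r'r f' c'c.
Qed.

Lemma ptfun_delCol f : ptfun k.+1 m.+1 len f ->
  ptfun k.+1 m (len \o bump c0) (fun r j => f r (bump c0 j)).
Proof.
case=> inS col1 no0; split.
- by move=> r j /inS; rewrite bump_ltnS.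
- by move=> j jm; apply: col1; rewrite bump_ltnS.
- move=> r j r' j' rk jm rl nf r'r f' j'j.
  rewrite -(ltn_bump2 c0) in j'j; rewrite -(bump_ltnS _ (c0m : c0 <= m)) in jm.
  exact: no0 rk jm rl nf r'r f' j'j.
Qed.

Lemma insCol_delCol f : ptfun k.+1 m.+1 len f -> f r0 c0 ->
    (forall r, r < r0 -> f r c0 = false) ->
  insCol (fun r j => f r (bump c0 j)) =2 f.
Proof.
move=> [inS _ _] f00 below r c.
case: (eqVneq c c0) => [->|/unbumpK_neq <-]; last by rewrite !insCol_bump.
rewrite insCol_c0; case: (eqVneq r r0) => [->|nr]; first by rewrite f00.
case E: (f r c0) => //; have /and3P[_ _] := inS _ _ E.
by rewrite ltn_len_c0 leq_eqVlt (negbTE nr) /= => /below; rewrite E.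
Qed.

Lemma ones_insCol f : ones k.+1 m.+1 (insCol f) = (ones k.+1 m f).+1.
Proof.
rewrite /ones (eq_bigr (fun i : 'I_k.+1 => ((i : nat) == r0) + \sum_(j < m) f i j)).
  by rewrite big_split /= (sum_andb_eq_ord true r0k).
move=> i _; rewrite (bigD1_ord (Ordinal c0m)) //= insCol_c0.
by congr (_ + _); apply: eq_bigr => j _; rewrite insCol_bump.
Qed.

Lemma PTlen_delCol :
  (\sum_(T : grid k.+1 m.+1 | (isPTlen len T && cell T r0 c0)
      && ~~ [exists r : 'I_k.+1, (r < r0)%N && cell T r c0]) 'X^(rankLen T))%R
  = PTlen k.+1 m (len \o bump c0).
Proof.
pose ins (T : grid k.+1 m) : grid k.+1 m.+1 := mkgrid k.+1 m.+1 (insCol (cell T)).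
pose del (T : grid k.+1 m.+1) : grid k.+1 m := mkgrid k.+1 m (fun r j => cell T r (bump c0 j)).
have cell_ins T : cell (ins T) =2 insCol (cell T).
  apply: cell_mkgrid_in => r c; case: (eqVneq c c0) => [->|/unbumpK_neq <-].
    by rewrite insCol_c0 => /eqP->; rewrite r0k.
  by rewrite insCol_bump bump_ltnS // => /cell_bound.
have cell_del T : cell (del T) =2 fun r j => cell T r (bump c0 j).
  by apply: cell_mkgrid_in => r j /cell_bound; rewrite bump_ltnS.
apply: (@big_bij_on _ _ _ _ _ _ _ ins del).
- move=> T /isPTlenP V; rewrite cell_ins insCol_c0 eqxx andbT; apply/andP; split.
    by apply/isPTlenP; apply: ptfun_ext (ptfun_insCol V) => // r c; rewrite cell_ins.
  by apply/existsP => -[r]; rewrite cell_ins insCol_c0; case: eqP => [->|]; rewrite ?ltnn ?andbF.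
- move=> T /andP[/andP[/isPTlenP V T00] /existsP below].
  have below' r : r < r0 -> cell T r c0 = false.
    move=> rr; apply/negP => Tr; apply: below.
    by exists (Ordinal (ltn_trans rr r0k)); rewrite /= rr.
  split.
    by apply/isPTlenP; apply: ptfun_ext (ptfun_delCol V) => // r j; rewrite cell_del.
  apply: cell_inj => r c; rewrite cell_ins -[RHS](insCol_delCol V T00 below').
  by rewrite /insCol cell_del.
- by move=> T _; apply: cell_inj => r j; rewrite cell_del cell_ins insCol_bump.
- move=> T _; rewrite /rankLen !card_grid.
  have -> : ones k.+1 m.+1 (cell (ins T)) = ones k.+1 m.+1 (insCol (cell T)).
    by apply: eq_bigr => i _; apply: eq_bigr => j _; rewrite cell_ins.
  by rewrite ones_insCol subSS.
Qed.

Definition insCell (f : nat -> nat -> bool) r c := f r c || (r == r0) && (c == c0).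
Definition delCell (f : nat -> nat -> bool) r c := f r c && ~~ ((r == r0) && (c == c0)).

Local Notation short := (shortenCol c0 len).

Let ltn_short r c : r < short c -> r < len c.
Proof. by rewrite /shortenCol; case: eqP => [->|//]; lia. Qed.

Let short_c0 : short c0 = r0.
Proof. by rewrite /shortenCol eqxx. Qed.

Lemma ptfun_insCell f : ptfun k.+1 m.+1 short f -> ptfun k.+1 m.+1 len (insCell f).
Proof.
case=> inS col1 no0; split.
- move=> r c /orP[/inS/and3P[-> -> /ltn_short //]|/andP[/eqP-> /eqP->]].
  by rewrite r0k c0m ltn_len_c0 /=.
- by move=> c /col1[r rk fr]; exists r; rewrite // /insCell fr.
- move=> r c r' c' rk cm rl; rewrite /insCell negb_or => /andP[nf n0] r'r.
  case/orP=> [f'|/andP[/eqP Er' /eqP Ec]]; last by move: r'r rl; rewrite Er' Ec; lia.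
  move=> c'c /orP[f''|/andP[/eqP Er /eqP Ec']]; last first.
    have /corner : c0 < c < m.+1 by rewrite -Ec' c'c.
    by move: rl; rewrite Er; lia.
  apply: (no0 r c r' c') => //; rewrite /shortenCol.
  by move: rl; case: (eqVneq c c0) n0 => [->|//] /=; rewrite andbT => /eqP; lia.
Qed.

Lemma ptfun_delCell f : ptfun k.+1 m.+1 len f -> f r0 c0 ->
    (exists2 r, r < r0 & f r c0) ->
  ptfun k.+1 m.+1 short (delCell f).
Proof.
case=> inS col1 no0 f00 [r1 r1r fr1]; split.
- move=> r c /andP[/inS/and3P[-> -> +]]; rewrite /shortenCol.
  by case: (eqVneq c c0) => [->|//] /=; rewrite andbT => rl /eqP; lia.
- move=> c cm; case: (eqVneq c c0) => [->|nc].
    by exists r1; rewrite /delCell ?fr1 //= ?(ltn_trans r1r) // (ltn_eqF r1r).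
  by have [r rk fr] := col1 c cm; exists r; rewrite // /delCell fr (negbTE nc) andbF.
- move=> r c r' c' rk cm rl nf r'r /andP[f' _] c'c /andP[f'' _].
  apply: (no0 r c r' c') => //; first exact: ltn_short.
  apply: contra nf => frc; rewrite /delCell frc /=; apply: contraTN rl => /andP[/eqP-> /eqP->].
  by rewrite short_c0 ltnn.
Qed.

Lemma insCell_delCell (f : nat -> nat -> bool) : f r0 c0 -> insCell (delCell f) =2 f.
Proof.
move=> f00 r c; rewrite /insCell /delCell.
by case: (eqVneq r r0) => [->|]; case: (eqVneq c c0) => [->|]; rewrite ?f00 ?andbT ?orbF.
Qed.

Lemma delCell_insCell (f : nat -> nat -> bool) : ptfun k.+1 m.+1 short f -> delCell (insCell f) =2 f.
Proof.
move=> [inS _ _] r c; rewrite /insCell /delCell.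
case: (eqVneq r r0) => [->|]; case: (eqVneq c c0) => [->|] //=; rewrite ?andbT ?orbF //.
case E: (f r0 c0); rewrite ?orbT //; have /and3P[_ _] := inS _ _ E.
by rewrite short_c0 ltnn.
Qed.

Lemma ones_insCell f :
  ptfun k.+1 m.+1 short f -> ones k.+1 m.+1 (insCell f) = (ones k.+1 m.+1 f).+1.
Proof.
move=> V; have one_r0 : \sum_(i < k.+1) ((i : nat) == r0) = 1 := sum_andb_eq_ord true r0k.
rewrite /ones -[X in _ = X.+1]addn0 -addnS -one_r0 -big_split /=.
apply: eq_bigr => i _; rewrite -(sum_andb_eq_ord (i == r0 :> nat) c0m) -big_split /=.
apply: eq_bigr => j _; have := delCell_insCell V i j; rewrite /insCell /delCell.
by case: (f i j); case: (((i : nat) == r0) && ((j : nat) == c0)).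
Qed.

Lemma PTlen_delCell :
  (\sum_(T : grid k.+1 m.+1 | (isPTlen len T && cell T r0 c0)
      && [exists r : 'I_k.+1, (r < r0)%N && cell T r c0]) 'X^(rankLen T))%R
  = ('X * PTlen k.+1 m.+1 short)%R.
Proof.
pose ins (T : grid k.+1 m.+1) : grid k.+1 m.+1 := mkgrid k.+1 m.+1 (insCell (cell T)).
pose del (T : grid k.+1 m.+1) : grid k.+1 m.+1 := mkgrid k.+1 m.+1 (delCell (cell T)).
have cell_ins T : cell (ins T) =2 insCell (cell T).
  apply: cell_mkgrid_in => r c /orP[/cell_bound //|/andP[/eqP-> /eqP->]].
  by rewrite r0k.
have cell_del T : cell (del T) =2 delCell (cell T).
  by apply: cell_mkgrid_in => r c /andP[/cell_bound].
rewrite /PTlen big_distrr /=; apply: (@big_bij_on _ _ _ _ _ _ _ ins del).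
- move=> T /isPTlenP V; have [inS col1 _] := V.
  rewrite cell_ins /insCell !eqxx orbT andbT; apply/andP; split.
    by apply/isPTlenP; apply: ptfun_ext (ptfun_insCell V) => // r c; rewrite cell_ins.
  have [r rk fr] := col1 c0 c0m; have /and3P[_ _] := inS _ _ fr; rewrite short_c0 => rr.
  by apply/existsP; exists (Ordinal rk); rewrite /= rr cell_ins /insCell fr.
- move=> T /andP[/andP[/isPTlenP V T00] /existsP[r1 /andP[r1r Tr1]]].
  split; last by apply: cell_inj => r c; rewrite cell_ins -[RHS](insCell_delCell T00)
    /insCell /delCell cell_del.
  apply/isPTlenP; apply: ptfun_ext (ptfun_delCell V T00 _) => // [r c|].
    by rewrite cell_del.
  by exists r1.
- move=> T /isPTlenP V; apply: cell_inj => r c.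
  by rewrite cell_del -[RHS](delCell_insCell V) /delCell cell_ins.
- move=> T /isPTlenP V; rewrite /rankLen !card_grid -exprS; congr ('X^_)%R.
  have -> : ones k.+1 m.+1 (cell (ins T)) = ones k.+1 m.+1 (insCell (cell T)).
    by apply: eq_bigr => i _; apply: eq_bigr => j _; rewrite cell_ins.
  by rewrite ones_insCell // subSn // (ptfun_ones V).
Qed.

Lemma ptfun_corner0 f : ptfun k.+1 m.+1 len f -> ~~ f r0 c0 -> forall c, f r0 c = false.
Proof.
case=> inS col1 no0 n00 c; apply/negP => f0c; have /and3P[_ cm rl] := inS _ _ f0c.
case: (ltngtP c c0) => [cc0|c0c|Ec]; last by move: f0c; rewrite Ec (negbTE n00).
- have [r rk fr] := col1 c0 c0m; have /and3P[_ _] := inS _ _ fr; rewrite ltn_len_c0.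
  rewrite leq_eqVlt => /orP[/eqP Er|rr]; first by move: fr; rewrite Er (negbTE n00).
  by apply: (no0 r0 c0 r c); rewrite ?ltn_len_c0.
- have /corner : c0 < c < m.+1 by rewrite c0c cm.
  by move: rl; lia.
Qed.

Lemma PTlen_corner :
  PTlen k.+1 m.+1 len =
    ('X * PTlen k.+1 m.+1 (shortenCol c0 len) + PTlen k.+1 m (len \o bump c0)
     + PTlen k m.+1 (delRowLens r0 len))%R.
Proof.
rewrite {1}/PTlen (bigID (fun T => cell T r0 c0)) /=.
rewrite (bigID (fun T => [exists r : 'I_k.+1, (r < r0)%N && cell T r c0])) /=.
rewrite PTlen_delCell PTlen_delCol -(@PTlen_delRow k m.+1 r0 len r0k); congr (_ + _)%R.
apply: eq_bigl => T; apply: andb_id2l => /isPTlenP V.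
apply/idP/forallP => [n00 j|empty]; last by have := empty (Ordinal c0m).
by rewrite (ptfun_corner0 V n00).
Qed.

End Corner.

Definition PTseq k (L : seq nat) : {poly int} := PTlen k (size L) (nth 0 L).

Definition delRowSeq r0 (L : seq nat) := [seq if r0 < x then x.-1 else x | x <- L].

Lemma nth_delRowSeq r0 L : nth 0 (delRowSeq r0 L) =1 delRowLens r0 (nth 0 L).
Proof.
move=> j; rewrite /delRowLens; case: (ltnP j (size L)) => jL; first by rewrite (nth_map 0).
by rewrite !nth_default ?size_map.
Qed.

Lemma delRowSeq_small r0 L : all (fun x => x <= r0) L -> delRowSeq r0 L = L.
Proof.
by move=> /allP small; rewrite -[RHS]map_id; apply/eq_in_map => x /small; rewrite ltnNge => ->.
Qed.

Lemma delRowSeq_big r0 L : all (fun x => r0 < x) L -> delRowSeq r0 L = map predn L.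
Proof. by move=> /allP big; apply/eq_in_map => x /big ->. Qed.

Lemma delRowSeq_cat r0 A B : delRowSeq r0 (A ++ B) = delRowSeq r0 A ++ delRowSeq r0 B.
Proof. exact: map_cat. Qed.

Lemma PTseq0 k L : 0 \in L -> PTseq k L = 0%R.
Proof. by move=> L0; apply: (@PTlen_col0 _ _ _ (index 0 L)); rewrite ?index_mem ?nth_index. Qed.

Lemma PTseq_top_row k L : all (fun x => x <= k) L -> PTseq k.+1 L = PTseq k L.
Proof.
move=> /allP Lk; have le_k j : nth 0 L j <= k.
  by case: (ltnP j (size L)) => jL; [exact/Lk/mem_nth | rewrite nth_default].
rewrite /PTseq [RHS](@eq_PTlen _ _ (nth 0 L) (delRowLens k (nth 0 L))) => [|j]; last first.
  by rewrite /delRowLens ltnNge le_k.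
rewrite -(@PTlen_delRow k _ k _ (leqnn k)); apply: eq_bigl => T.
apply/esym/andb_idr => /isPTlenP[inS _ _]; apply/forallP => j; apply/negP.
by move=> /inS/and3P[_ _]; rewrite ltnNge le_k.
Qed.

Lemma PTseq_corner k A h B : 0 < h <= k.+1 -> all (fun x => x < h) B ->
  PTseq k.+1 (A ++ h :: B) =
    ('X * PTseq k.+1 (A ++ h.-1 :: B) + PTseq k.+1 (A ++ B)
     + PTseq k (delRowSeq h.-1 (A ++ h :: B)))%R.
Proof.
move=> hk /allP Bh; set L := A ++ h :: B.
have nth_L : nth 0 L (size A) = h by rewrite nth_cat ltnn subnn.
have corner j : size A < j < (size A + size B).+1 -> nth 0 L j < h.
  move=> /andP[Aj jB]; rewrite nth_cat ifN; last by rewrite -leqNgt ltnW.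
  case E: (j - size A) => [|i]; first by move: Aj E; lia.
  have iB : i < size B by move: jB E; lia.
  exact/Bh/mem_nth.
have := @PTlen_corner k (size A + size B) (size A) (nth 0 L); rewrite nth_L.
have sizeL : size L = (size A + size B).+1 by rewrite size_cat addnS.
move=> /(_ (leq_addr _ _) hk corner); rewrite /PTseq sizeL => ->.
rewrite size_map sizeL !size_cat /= addnS.
congr (_ * _ + _ + _)%R; apply: eq_PTlen => j.
- rewrite /shortenCol; case: eqP => [->|/eqP nj]; first by rewrite nth_L nth_cat ltnn subnn.
  rewrite /L !nth_cat; case: ltnP => // Aj.
  by case E: (j - size A) => //; move: nj Aj E; lia.
- rewrite /= bumpE /L !nth_cat; case: (ltnP j (size A)) => [-> //|Aj].
  by rewrite ltnNge leqW //= subSn.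
- by rewrite nth_delRowSeq.
Qed.

Lemma nseq_cat_cons (T : Type) m (x : T) s : nseq m x ++ x :: s = nseq m.+1 x ++ s.
Proof. by elim: m => //= m ->. Qed.

Fixpoint colLensFrom (h : nat) (I : seq nat) : seq nat :=
  if I is i :: I' then nseq i.-1 h ++ colLensFrom h.-1 I' else [::].

Lemma colLensE I : colLens I = colLensFrom (size I) I.
Proof.
suff gen h : flatten [seq nseq (nth 0 I t).-1 (h - t) | t <- iota 0 (size I)] =
  colLensFrom h I by apply: gen.
elim: I h => [|i I IH] h //=; rewrite subn0 -(IH h.-1).
congr (_ ++ _); rewrite -[1]/(1 + 0) iotaDl -map_comp; congr flatten.
by apply: eq_map => t /=; congr nseq; lia.
Qed.

Lemma colLensFrom_cat h I J :
  colLensFrom h (I ++ J) = colLensFrom h I ++ colLensFrom (h - size I) J.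
Proof.
elim: I h => [|i I IH] h /=; first by rewrite subn0.
by rewrite IH catA; congr (_ ++ colLensFrom _ _); lia.
Qed.

Lemma colLensFrom_le h I : all (fun x => x <= h) (colLensFrom h I).
Proof.
elim: I h => [|i I IH] h //=; rewrite all_cat all_nseq leqnn orbT /=.
by apply: sub_all (IH h.-1) => x /leq_trans; apply; rewrite leq_pred.
Qed.

Lemma colLensFrom_gt h I : size I <= h -> all (fun x => h - size I < x) (colLensFrom h I).
Proof.
elim: I h => [|i I IH] h //= Ih; rewrite all_cat all_nseq.
have -> : h - (size I).+1 = h.-1 - size I by lia.
rewrite IH ?andbT; last by lia.
by apply/orP; right; lia.
Qed.

Lemma map_predn_colLensFrom h I : map predn (colLensFrom h I) = colLensFrom h.-1 I.
Proof. by elim: I h => [|i I IH] h //=; rewrite map_cat map_nseq IH. Qed.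

Lemma PT_PTseq I : PT I = PTseq (size I) (colLensFrom (size I) I).
Proof. by rewrite PT_PTlen /PTseq /ncols /nrows colLensE. Qed.

Lemma PT_cons1 I : PT (1%N :: I) = PT I.
Proof. by rewrite !PT_PTseq /= PTseq_top_row ?colLensFrom_le. Qed.

Lemma incr_nthE I t : t < size I -> incr_nth I t = take t I ++ (nth 0 I t).+1 :: drop t.+1 I.
Proof. by elim: I t => [|i I IH] [|t] //= tI; rewrite ?drop0 ?IH. Qed.

Lemma colLensFrom_split h I t : t < size I ->
  colLensFrom h I =
    colLensFrom h (take t I) ++ nseq (nth 0 I t).-1 (h - t) ++ colLensFrom (h - t).-1 (drop t.+1 I).
Proof.
by move=> tI; rewrite -{1}(cat_take_drop t I) (drop_nth 0) // colLensFrom_cat size_take tI.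
Qed.

Lemma qintS m : qint m.+1 = (1 + 'X * qint m)%R.
Proof.
rewrite /qint big_ord_recl expr0 mulr_sumr; congr (_ + _)%R.
by apply: eq_bigr => i _; rewrite exprS.
Qed.

Section Composition.
Variable I : seq nat.
Hypothesis cI : composition I.

Local Notation n := (size I).

Lemma part_gt0 t : t < n -> 0 < nth 0 I t.
Proof. by move=> tn; apply: (all_nthP 0 cI). Qed.

(* The columns left and right of the corner of the shape of [incr_nth I t]. *)
Definition colsBefore t := colLensFrom n (take t I) ++ nseq (nth 0 I t).-1 (n - t).
Definition colsAfter t := colLensFrom (n - t).-1 (drop t.+1 I).

Lemma colLens_split t : t < n -> colLensFrom n I = colsBefore t ++ colsAfter t.
Proof. by move=> tn; rewrite (colLensFrom_split n tn) catA. Qed.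

Lemma colLens_incr_nth t : t < n ->
  colLensFrom n (incr_nth I t) = colsBefore t ++ (n - t) :: colsAfter t.
Proof.
move=> tn; rewrite incr_nthE // colLensFrom_cat size_take tn /= /colsBefore -catA.
by rewrite nseq_cat_cons prednK ?part_gt0.
Qed.

Lemma colsAfter_lt t : t < n -> all (fun x => x < n - t) (colsAfter t).
Proof.
move=> tn; apply: sub_all (colLensFrom_le _ _) => x /leq_ltn_trans; apply.
by rewrite ltn_predL subn_gt0.
Qed.

Lemma PT_incr_nth_corner t : t < n ->
  PT (incr_nth I t) =
    ('X * PTseq n (colsBefore t ++ (n - t)%N.-1 :: colsAfter t) + PT I
     + PTseq n.-1 (delRowSeq (n - t)%N.-1 (colsBefore t ++ (n - t)%N :: colsAfter t)))%R.
Proof.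
move=> tn; have n_gt0 : 0 < n by lia.
rewrite PT_PTseq size_incr_nth tn colLens_incr_nth // [PT I]PT_PTseq (colLens_split tn).
have := @PTseq_corner n.-1 (colsBefore t) (n - t) (colsAfter t).
by rewrite prednK //; apply; [rewrite subn_gt0 tn leq_subr | exact: colsAfter_lt].
Qed.

Lemma corner_next t : t.+1 < n ->
  colsBefore t ++ (n - t).-1 :: colsAfter t = colLensFrom n (incr_nth I t.+1).
Proof.
move=> tn; rewrite colLens_incr_nth // /colsBefore /colsAfter (take_nth 0) ?(ltnW tn) //.
rewrite -cats1 colLensFrom_cat size_take (ltnW tn) /= cats0 (drop_nth 0) //= -!catA.
have -> : n - t.+1 = (n - t).-1 by lia.
by rewrite nseq_cat_cons.
Qed.

Lemma size_mergeAt t : t.+1 < n -> size (mergeAt I t) = n.-1.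
Proof. by move=> tn; rewrite size_cat size_takel /= ?size_drop; lia. Qed.

Lemma colsBefore_gt t : t < n -> all (fun x => (n - t).-1 < x) (colsBefore t ++ [:: n - t]).
Proof.
move=> tn; rewrite /colsBefore -catA all_cat all_cat all_nseq /= ltn_predL subn_gt0 tn.
rewrite !orbT andbT; have := @colLensFrom_gt n (take t I); rewrite size_takel; last by lia.
by move=> /(_ (ltnW tn)); rewrite andbT; apply: sub_all => x /=; lia.
Qed.

Lemma corner_row_merge t : t.+1 < n ->
  delRowSeq (n - t).-1 (colsBefore t ++ (n - t) :: colsAfter t) =
    colLensFrom n.-1 (mergeAt I t).
Proof.
move=> tn; have tn' : t < n by lia.
rewrite -cat1s catA delRowSeq_cat delRowSeq_big ?colsBefore_gt //.
rewrite delRowSeq_small ?colLensFrom_le // /colsBefore /colsAfter (drop_nth 0) //.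
rewrite !map_cat map_predn_colLensFrom map_nseq /mergeAt colLensFrom_cat size_takel; last by lia.
have -> : n.-1 - t = (n - t).-1 by lia.
rewrite /= -!catA; congr (_ ++ _).
rewrite cat1s nseq_cat_cons catA -nseqD; congr (nseq _ _ ++ _).
by have := part_gt0 tn'; have := part_gt0 tn; lia.
Qed.

Lemma PT_incr_nth_next t : t.+1 < n ->
  PT (incr_nth I t) = ('X * PT (incr_nth I t.+1) + PT I + PT (mergeAt I t))%R.
Proof.
move=> tn; rewrite PT_incr_nth_corner; last by lia.
rewrite corner_next // corner_row_merge // [PT (incr_nth _ _)]PT_PTseq.
by rewrite [PT (mergeAt _ _)]PT_PTseq size_incr_nth tn size_mergeAt.
Qed.

Lemma PT_incr_nth_last : 0 < n -> PT (incr_nth I n.-1) = PT I.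
Proof.
move=> n_gt0; rewrite PT_incr_nth_corner ?prednK //.
have -> : (n - n.-1 = 1)%N by lia.
rewrite [PTseq n _]PTseq0 ?[PTseq n.-1 _]PTseq0 ?mulr0 ?add0r ?addr0 //.
  by rewrite delRowSeq_cat mem_cat mem_head orbT.
by rewrite mem_cat mem_head orbT.
Qed.

Lemma PT_incr_nth t : t < n ->
  PT (incr_nth I t) =
    (qint (n - t) * PT I + \sum_(j < (n - t).-1) 'X^j * PT (mergeAt I (t + j)))%R.
Proof.
move=> tn; have [d Ed] : exists d, (n - t = d.+1)%N by exists (n - t).-1; lia.
elim: d t tn Ed => [|d IH] t tn Ed; rewrite Ed /=.
  have -> : t = n.-1 by lia.
  rewrite PT_incr_nth_last; last by lia.
  by rewrite big_ord0 addr0 /qint big_ord1 expr0 mul1r.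
have tn1 : t.+1 < n by lia.
have Ed1 : (n - t.+1 = d.+1)%N by lia.
rewrite PT_incr_nth_next // (IH _ tn1 Ed1) Ed1 big_ord_recl /= addn0.
set S := (\sum_(j < d) _)%R.
have shift : (\sum_(i < d) 'X^(lift ord0 i) * PT (mergeAt I (t + lift ord0 i)) = 'X * S)%R.
  rewrite mulr_sumr; apply: eq_bigr => i _.
  by rewrite lift0 addnS -addSn exprS mulrA.
by rewrite shift [qint d.+2]qintS expr0 mul1r; ring.
Qed.

End Composition.

Theorem mainTheorem13 (I : seq nat) :
  I != [::] -> composition I ->
  PT (1%N :: I) = PT I /\
  PT ((1 + head 0 I)%N :: behead I) =
    (qint (size I) * PT I + \sum_(j < (size I).-1) 'X^j * PT (mergeAt I j))%R.
Proof.
case: I => [//|i I] _ cI; split; first exact: PT_cons1.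
have -> : ((1 + head 0 (i :: I))%N :: behead (i :: I)) = incr_nth (i :: I) 0 by [].
by rewrite PT_incr_nth // subn0.
Qed.
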